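(* Let $G$ be a random $(d_1,d_2)$-biregular bipartite graph with $d_2\leq d_1\leq n^{1/3}$. There is an absolute constant $c_1>0$ such that (for $n$ large enough): (1) If $H$ is a subgraph of $K_{n,m}$ in which every vertex has degree at least $2$, with $e$ edges where $e=o(n^{1/3})$, then $\mathbb P(H\subseteq G)\leq c_1\left(\frac{(d_1-1)(d_2-1)}{nm}\right)^{e/2}$. (2) If $\alpha$ is a cycle of length $2k$ in $K_{n,m}$ with $k\leq n^{1/10}$, then $\mathbb P(\alpha\subseteq G)\leq c_1\left(\frac{(d_1-1)(d_2-1)}{nm}\right)^{k}$. (3) If moreover $\beta$ is another cycle of length $2j\leq 2n^{1/10}$ in $K_{n,m}$ and $\alpha,\beta$ share $f$ edges, then $\mathbb P(\alpha\cup\beta\subseteq G)\leq c_1\left(\frac{(d_1-1)(d_2-1)}{nm}\right)^{j+k-f/2}$.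
   Context: A $(d_1,d_2)$-biregular bipartite graph on $V_1=[n]$, $V_2=[m]$ is a simple bipartite graph with all vertices in $V_1$ of degree $d_1$ and all in $V_2$ of degree $d_2$ ($nd_1=md_2$); a random one is chosen uniformly among all such. $K_{n,m}$ is the complete bipartite graph on $V_1\cup V_2$. Cycles are simple cycles. *)

From HB Require Import structures.
From mathcomp Require Import all_boot all_order all_algebra.
From mathcomp Require Import Rstruct.
From Stdlib Require Rdefinitions.
Notation R := Rdefinitions.R.
Set Implicit Arguments.
Unset Strict Implicit.
Unset Printing Implicit Defensive.
Import Order.TTheory GRing.Theory Num.Theory.
Local Open Scope ring_scope.

Notation bigraph n m := {set ('I_n * 'I_m)}.

Definition deg1 n m (E : bigraph n m) (i : 'I_n) : nat := #|[set j | (i, j) \in E]|.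
Definition deg2 n m (E : bigraph n m) (j : 'I_m) : nat := #|[set i | (i, j) \in E]|.

Definition biregular n m (d1 d2 : nat) (E : bigraph n m) : bool :=
  [forall i, deg1 E i == d1] && [forall j, deg2 E j == d2].

(* Every vertex of H (= every endpoint of an edge of H) has degree >= 2 in H. *)
Definition min_deg_ge2 n m (H : bigraph n m) : Prop :=
  (forall i, (0 < deg1 H i)%N -> (2 <= deg1 H i)%N) /\
  (forall j, (0 < deg2 H j)%N -> (2 <= deg2 H j)%N).

(* C is (the edge set of) a simple cycle of length 2k in K_{n,m}:
   a_0 b_0 a_1 b_1 ... a_{k-1} b_{k-1} a_0 with distinct vertices. *)
Definition is_cycle n m (k : nat) (C : bigraph n m) : Prop :=
  (2 <= k)%N /\
  exists (a : 'I_k -> 'I_n) (b : 'I_k -> 'I_m),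
    injective a /\ injective b /\
    C = [set (a i, b i) | i : 'I_k] :|: [set (a (ordS i), b i) | i : 'I_k].

Definition prob_sub n m (d1 d2 : nat) (F : bigraph n m) : R :=
  (#|[set G : bigraph n m | biregular d1 d2 G & F \subset G]|%:R
   / #|[set G : bigraph n m | biregular d1 d2 G]|%:R).

(* g(n) = o(n^{1/3}), written as g(n)^3 / n -> 0. *)
Definition little_o_cuberoot (g : nat -> nat) : Prop :=
  forall eps : R, 0 < eps -> exists N : nat, forall n : nat, (N <= n)%N ->
    (g n)%:R ^+ 3 <= eps * n%:R.

Definition bratio n m (d1 d2 : nat) : R := ((d1 - 1) * (d2 - 1))%N%:R / (n * m)%N%:R.

(* McKay's switching argument.  For an edge (u,v) outside S, switching a
   biregular supergraph G of (u,v) |: S along an edge (x,y), i.e. replacing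
   (u,v), (x,y) by (u,y), (x,v), yields a biregular supergraph of S avoiding
   (u,v), from which (G, (x,y)) can be recovered.  Every such G has at least
   n d1 - c admissible edges (x,y), with c = e + d1 + d2 + 2 d1 d2, and a
   switched graph can be switched back in at most (d1 - deg_S u)(d2 - deg_S v)
   ways.  Adding the e edges of H one at a time thus gives
     N(H) (n d1 - c)^e <= N(0) prod_i (d1)_(deg_H i) prod_j (d2)_(deg_H j),
   where N(F) counts biregular supergraphs of F and (d)_h is a falling
   factorial.  Since (d)_h^2 <= (d(d-1))^h unless h = 1, minimum degree 2
   bounds the product by (d1(d1-1)d2(d2-1))^(e/2), which equals
   (n d1)^e ((d1-1)(d2-1)/(nm))^(e/2) because n d1 = m d2; and
   (n d1 - c)^e >= (n d1)^e / 2 as soon as 2 e c <= n d1.  This gives c1 = 2.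
   Cycles of length 2k, and unions of two of them, have minimum degree 2 and
   2k, resp. 2j + 2k - f edges, and the size assumptions make 2 e c <= n. *)

From HB Require Import structures.
From mathcomp Require Import all_boot all_order all_algebra.
From mathcomp Require Import Rstruct.
From mathcomp Require Import zify ring.
Import Order.TTheory GRing.Theory Num.Theory.
Set Implicit Arguments.
Unset Strict Implicit.
Unset Printing Implicit Defensive.

Lemma sum_pair_eq1 (T1 T2 : finType) (x a : T1) (b : T2) :
  \sum_y (((x, y) == (a, b)) : nat) = (x == a).
Proof.
rewrite (bigD1 b) //= xpair_eqE eqxx andbT big1 ?addn0 // => y /negbTE yb.
by rewrite xpair_eqE yb andbF.
Qed.

Lemma sum_pair_eq2 (T1 T2 : finType) (y : T2) (a : T1) (b : T2) :
  \sum_x (((x, y) == (a, b)) : nat) = (y == b).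
Proof.
rewrite (bigD1 a) //= xpair_eqE eqxx /= big1 ?addn0 // => x /negbTE xa.
by rewrite xpair_eqE xa.
Qed.

Lemma sum_pairE (T1 T2 : finType) (F : T1 * T2 -> nat) :
  \sum_p F p = \sum_x \sum_y F (x, y).
Proof. by rewrite pair_big; apply: eq_bigr => -[]. Qed.

Lemma card_pairs_in (T1 T2 : finType) (A : {set T1}) (f : T1 -> T2 -> bool) :
  #|[set z : T1 * T2 | (z.1 \in A) && f z.1 z.2]| = \sum_(x in A) \sum_y f x y.
Proof.
rewrite -sum1_card big_mkcond /= sum_pairE [RHS]big_mkcond /=.
apply: eq_bigr => x _; have [xA|xA] := boolP (x \in A).
  by apply: eq_bigr => y _; rewrite inE xA.
by rewrite big1 // => y _; rewrite inE (negbTE xA).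
Qed.

Lemma leq2_cardsU (T : finType) (A B : {set T}) :
  (0 < #|A| -> 1 < #|A|) -> (0 < #|B| -> 1 < #|B|) ->
  0 < #|A :|: B| -> 1 < #|A :|: B|.
Proof.
move=> hA hB; have [A0|/hA A2] := posnP #|A|; last first.
  by move=> _; apply: leq_trans A2 (subset_leq_card (subsetUl A B)).
have [B0|/hB B2] := posnP #|B|; last first.
  by move=> _; apply: leq_trans B2 (subset_leq_card (subsetUr A B)).
by rewrite (cards0_eq A0) (cards0_eq B0) setU0 cards0.
Qed.

Section Degrees.
Variables n m : nat.
Implicit Types (A B E G S : bigraph n m) (i : 'I_n) (j : 'I_m).

Lemma deg1E E i : deg1 E i = \sum_j ((i, j) \in E).
Proof. by rewrite /deg1 -sum1_card big_mkcond /=; apply: eq_bigr => j _; rewrite inE. Qed.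

Lemma deg2E E j : deg2 E j = \sum_i ((i, j) \in E).
Proof. by rewrite /deg2 -sum1_card big_mkcond /=; apply: eq_bigr => i _; rewrite inE. Qed.

Lemma card_bigraphE E : #|E| = \sum_i \sum_j ((i, j) \in E).
Proof. by rewrite pair_big /= -sum1_card big_mkcond; apply: eq_bigr => -[i j]. Qed.

Lemma sum_deg1 E : \sum_i deg1 E i = #|E|.
Proof. by rewrite card_bigraphE; apply: eq_bigr => i _; rewrite deg1E. Qed.

Lemma sum_deg2 E : \sum_j deg2 E j = #|E|.
Proof. by rewrite card_bigraphE exchange_big; apply: eq_bigr => j _; rewrite deg2E. Qed.

Lemma card_biregular d1 d2 G : biregular d1 d2 G -> #|G| = n * d1.
Proof.
case/andP => /forallP deg_d1 _; rewrite -sum_deg1 (eq_bigr (fun=> d1)).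
  by rewrite sum_nat_const card_ord.
by move=> i _; apply/eqP.
Qed.

Lemma deg1_setU1 E i u v : (u, v) \notin E -> deg1 ((u, v) |: E) i = deg1 E i + (i == u).
Proof.
move=> uvE; rewrite !deg1E -(sum_pair_eq1 i u v) -big_split; apply: eq_bigr => j _.
by rewrite !inE; have [->|_] := eqVneq (i, j) (u, v); rewrite /= ?(negbTE uvE) ?addn0 ?add0n.
Qed.

Lemma deg2_setU1 E j u v : (u, v) \notin E -> deg2 ((u, v) |: E) j = deg2 E j + (j == v).
Proof.
move=> uvE; rewrite !deg2E -(sum_pair_eq2 j u v) -big_split; apply: eq_bigr => i _.
by rewrite !inE; have [->|_] := eqVneq (i, j) (u, v); rewrite /= ?(negbTE uvE) ?addn0 ?add0n.
Qed.

Lemma deg1_setD G S i : S \subset G -> deg1 (G :\: S) i = deg1 G i - deg1 S i.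
Proof.
move=> SG; have sub : [set j | (i, j) \in S] \subset [set j | (i, j) \in G].
  by apply/subsetP => j; rewrite !inE => /(subsetP SG).
rewrite /deg1 -(setIidPr sub) -cardsD.
by apply: eq_card => j; rewrite !inE.
Qed.

Lemma deg2_setD G S j : S \subset G -> deg2 (G :\: S) j = deg2 G j - deg2 S j.
Proof.
move=> SG; have sub : [set i | (i, j) \in S] \subset [set i | (i, j) \in G].
  by apply/subsetP => i; rewrite !inE => /(subsetP SG).
rewrite /deg2 -(setIidPr sub) -cardsD.
by apply: eq_card => i; rewrite !inE.
Qed.

Lemma min_deg_ge2U A B : min_deg_ge2 A -> min_deg_ge2 B -> min_deg_ge2 (A :|: B).
Proof.
case=> A1 A2 [B1 B2]; split=> [i|j].
  have -> : deg1 (A :|: B) i = #|[set j | (i, j) \in A] :|: [set j | (i, j) \in B]|.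
    by apply: eq_card => j; rewrite !inE.
  exact: leq2_cardsU (A1 i) (B1 i).
have -> : deg2 (A :|: B) j = #|[set i | (i, j) \in A] :|: [set i | (i, j) \in B]|.
  by apply: eq_card => i; rewrite !inE.
exact: leq2_cardsU (A2 j) (B2 j).
Qed.

End Degrees.

Definition nbireg n m d1 d2 (S : bigraph n m) : nat :=
  #|[set G : bigraph n m | biregular d1 d2 G & S \subset G]|.

Section Switching.
Variables (n m : nat) (S : bigraph n m) (u : 'I_n) (v : 'I_m).
Implicit Types (G : bigraph n m) (p q : 'I_n * 'I_m).

Definition switch G p : bigraph n m :=
  (G :\: [set (u, v); p]) :|: [set (u, p.2); (p.1, v)].

Definition switchable G p : bool :=
  [&& p \in G, p.1 != u, p.2 != v, p \notin S, (u, p.2) \notin G & (p.1, v) \notin G].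

Definition switchable_back G p : bool :=
  [&& (u, p.2) \in G, (u, p.2) \notin S, (p.1, v) \in G & (p.1, v) \notin S].

Lemma switch_indicator G x y q : (u, v) \in G -> switchable G (x, y) ->
  (q \in switch G (x, y)) + (q == (u, v)) + (q == (x, y)) =
  (q \in G) + (q == (u, y)) + (q == (x, v)).
Proof.
move=> uvG /and5P[xyG /= /negbTE xu /negbTE yv _ /andP[/negbTE uyG /negbTE xvG]].
have vy : (v == y) = false by rewrite eq_sym.
have ux : (u == x) = false by rewrite eq_sym.
rewrite /switch !inE /=.
have [->|_] := eqVneq q (u, v); first by rewrite ?xpair_eqE ?eqxx ?ux ?vy ?uvG.
have [->|_] := eqVneq q (x, y); first by rewrite ?xpair_eqE ?eqxx ?xu ?yv ?xyG.
have [->|_] := eqVneq q (u, y); first by rewrite ?xpair_eqE ?eqxx ?uyG ?ux ?vy ?xu ?yv.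
have [->|_] := eqVneq q (x, v); first by rewrite ?xpair_eqE ?eqxx ?xvG ?ux ?vy ?xu ?yv.
by case: (q \in G).
Qed.

Lemma deg1_switch G x y i : (u, v) \in G -> switchable G (x, y) ->
  deg1 (switch G (x, y)) i = deg1 G i.
Proof.
move=> uvG sw.
have := @eq_bigr _ 0 addn _ (index_enum 'I_m) xpredT _ _
  (fun j _ => switch_indicator (i, j) uvG sw).
by rewrite !big_split /= !sum_pair_eq1 -!deg1E => /eqP; rewrite !eqn_add2r => /eqP.
Qed.

Lemma deg2_switch G x y j : (u, v) \in G -> switchable G (x, y) ->
  deg2 (switch G (x, y)) j = deg2 G j.
Proof.
move=> uvG sw.
have := @eq_bigr _ 0 addn _ (index_enum 'I_n) xpredT _ _
  (fun i _ => switch_indicator (i, j) uvG sw).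
rewrite !big_split /= !sum_pair_eq2 -!deg2E => /eqP.
by rewrite -!addnA [(j == y) + _]addnC !eqn_add2r => /eqP.
Qed.

Lemma biregular_switch d1 d2 G x y : (u, v) \in G -> switchable G (x, y) ->
  biregular d1 d2 G -> biregular d1 d2 (switch G (x, y)).
Proof.
move=> uvG sw /andP[/forallP reg1 /forallP reg2].
by apply/andP; split; apply/forallP => w; rewrite ?deg1_switch ?deg2_switch.
Qed.

Lemma switchK G x y : (u, v) \in G -> switchable G (x, y) ->
  (switch G (x, y) :\: [set (u, y); (x, v)]) :|: [set (u, v); (x, y)] = G.
Proof.
move=> uvG /and5P[xyG /= _ _ _ /andP[/negbTE uyG /negbTE xvG]].
apply/setP => q; rewrite /switch !inE /=.
have [->|_] := eqVneq q (u, v); first by rewrite uvG !orbT.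
have [->|_] := eqVneq q (x, y); first by rewrite xyG !orbT.
have [->|_] := eqVneq q (u, y); first by rewrite uyG.
have [->|_] := eqVneq q (x, v); first by rewrite xvG.
by rewrite !orbF.
Qed.

Lemma switch_props G x y : (u, v) \notin S -> S \subset G -> switchable G (x, y) ->
  [/\ S \subset switch G (x, y), (u, v) \notin switch G (x, y) &
      switchable_back (switch G (x, y)) (x, y)].
Proof.
move=> uvS SG /and5P[_ /= xu yv xyS /andP[uyG xvG]].
have notin_S q : q \notin G -> q \notin S by apply: contra; apply: (subsetP SG).
split.
- apply/subsetP => q qS; rewrite /switch !inE (subsetP SG _ qS) andbT.
  by apply/orP; left; apply/negP => /orP[] /eqP qE; rewrite -qE qS in uvS xyS.
- by rewrite /switch !inE /= !xpair_eqE !eqxx eq_sym (negbTE xu) eq_sym (negbTE yv).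
- by rewrite /switchable_back /switch !inE /= !eqxx !orbT !notin_S.
Qed.

Lemma switchable_lb d1 d2 G : biregular d1 d2 G ->
  n * d1 <= \sum_p switchable G p + (#|S| + d1 + d2 + 2 * d1 * d2).
Proof.
move=> Greg; have [/forallP reg1 /forallP reg2] := andP Greg.
have edges : \sum_p (p \in G) = n * d1.
  by rewrite sum_pairE -card_bigraphE (card_biregular Greg).
have in_S : \sum_p (p \in S) = #|S| by rewrite sum_pairE -card_bigraphE.
have at_u : \sum_p ((p \in G) && (p.1 == u)) = d1.
  rewrite sum_pairE (bigD1 u) //= [X in _ + X]big1 ?addn0; last first.
    by move=> i /negbTE iu; apply: big1 => j _; rewrite iu andbF.
  by rewrite -(eqP (reg1 u)) deg1E; apply: eq_bigr => j _; rewrite eqxx andbT.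
have at_v : \sum_p ((p \in G) && (p.2 == v)) = d2.
  rewrite sum_pairE exchange_big (bigD1 v) //= [X in _ + X]big1 ?addn0; last first.
    by move=> j /negbTE jv; apply: big1 => i _; rewrite jv andbF.
  by rewrite -(eqP (reg2 v)) deg2E; apply: eq_bigr => i _; rewrite eqxx andbT.
have nbr_u : \sum_p ((p \in G) && ((u, p.2) \in G)) = d1 * d2.
  rewrite sum_pairE exchange_big -(eqP (reg1 u)) deg1E big_distrl; apply: eq_bigr => j _.
  rewrite -(eqP (reg2 j)) deg2E big_distrr; apply: eq_bigr => i _ /=.
  by case: (_ \in G); case: (_ \in G).
have nbr_v : \sum_p ((p \in G) && ((p.1, v) \in G)) = d1 * d2.
  rewrite sum_pairE mulnC -(eqP (reg2 v)) deg2E big_distrl; apply: eq_bigr => i _.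
  rewrite -(eqP (reg1 i)) deg1E big_distrr; apply: eq_bigr => j _ /=.
  by case: (_ \in G); case: (_ \in G).
(* A non-switchable edge of G lies in S, meets u or v, or has its other
   endpoint adjacent to u (resp. v). *)
rewrite -edges; apply: (@leq_trans (\sum_p (switchable G p + (p \in S)
    + ((p \in G) && (p.1 == u)) + ((p \in G) && (p.2 == v))
    + ((p \in G) && ((u, p.2) \in G)) + ((p \in G) && ((p.1, v) \in G))))).
  apply: leq_sum => -[x y] _; rewrite /switchable /=.
  by case: ((x, y) \in G); case: (x == u); case: (y == v); case: ((x, y) \in S);
    case: ((u, y) \in G); case: ((x, v) \in G).
by rewrite !big_split /= in_S at_u at_v nbr_u nbr_v -mulnA mul2n -addnn !addnA.
Qed.

Lemma sum_switchable_back d1 d2 G : biregular d1 d2 G -> S \subset G ->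
  \sum_p switchable_back G p = (d1 - deg1 S u) * (d2 - deg2 S v).
Proof.
move=> /andP[/forallP reg1 /forallP reg2] SG.
rewrite -(eqP (reg1 u)) -(eqP (reg2 v)) -deg1_setD // -deg2_setD // deg1E deg2E.
rewrite mulnC big_distrl sum_pairE; apply: eq_bigr => x _.
rewrite big_distrr; apply: eq_bigr => y _; rewrite /switchable_back !inE /=.
by case: ((u, y) \in G); case: ((u, y) \in S); case: ((x, v) \in G); case: ((x, v) \in S).
Qed.

Lemma nbireg_setU1 d1 d2 : (u, v) \notin S ->
  nbireg d1 d2 ((u, v) |: S) * (n * d1 - (#|S| + d1 + d2 + 2 * d1 * d2))
  <= nbireg d1 d2 S * ((d1 - deg1 S u) * (d2 - deg2 S v)).
Proof.
move=> uvS.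
set A := [set G | biregular d1 d2 G & (u, v) |: S \subset G].
set B := [set G | [&& biregular d1 d2 G, S \subset G & (u, v) \notin G]].
set P := [set z : bigraph n m * ('I_n * 'I_m) | (z.1 \in A) && switchable z.1 z.2].
set Q := [set z : bigraph n m * ('I_n * 'I_m) | (z.1 \in B) && switchable_back z.1 z.2].
have card_P : #|A| * (n * d1 - (#|S| + d1 + d2 + 2 * d1 * d2)) <= #|P|.
  rewrite card_pairs_in -sum_nat_const; apply: leq_sum => G; rewrite inE => /andP[Greg _].
  by rewrite leq_subLR addnC; apply: switchable_lb.
have card_Q : #|Q| <= nbireg d1 d2 S * ((d1 - deg1 S u) * (d2 - deg2 S v)).
  rewrite card_pairs_in (eq_bigr (fun=> (d1 - deg1 S u) * (d2 - deg2 S v))); last first.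
    by move=> G; rewrite inE => /and3P[Greg SG _]; apply: sum_switchable_back.
  rewrite sum_nat_const leq_mul2r subset_leq_card ?orbT //.
  by apply/subsetP => G; rewrite !inE => /and3P[-> ->].
have P_to_Q : #|P| <= #|Q|.
  pose sw z := (switch z.1 z.2, z.2).
  have uvG G : (u, v) |: S \subset G -> (u, v) \in G.
    by move/subsetP; apply; rewrite !inE eqxx.
  have sw_inj : {in P &, injective sw}.
    move=> [G [x y]] [G' [x' y']]; rewrite !inE /=.
    move=> /andP[/andP[_ /uvG uvG1] sw_xy] /andP[/andP[_ /uvG uvG2] sw_xy'] [eqG ex ey].
    subst x' y'.
    by rewrite -(switchK uvG1 sw_xy) -(switchK uvG2 sw_xy') eqG.
  rewrite -(card_in_imset sw_inj); apply/subset_leq_card/subsetP => z /imsetP[[G [x y]]].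
  rewrite !inE /= => /andP[/andP[Greg uvSG] sw_xy] ->.
  have SG : S \subset G by apply: subset_trans uvSG; apply: subsetUr.
  have [S_sw uv_sw back] := switch_props uvS SG sw_xy.
  have := biregular_switch (uvG _ uvSG) sw_xy Greg.
  rewrite /sw /=; move: (switch G (x, y)) S_sw uv_sw back => G' S_G' uv_G' back_G' reg_G'.
  by rewrite reg_G' S_G' uv_G' back_G'.
exact: leq_trans card_P (leq_trans P_to_Q card_Q).
Qed.

End Switching.

Lemma prod_ffact_bump (T : finType) (f : T -> nat) (u : T) d :
  \prod_i d ^_ (f i + (i == u)) = \prod_i d ^_ (f i) * (d - f u).
Proof.
rewrite (bigD1 u) // [in RHS](bigD1 u) //= eqxx addn1 ffactnSr mulnAC.
by congr (_ * _ * _); apply: eq_bigr => i /negbTE ->; rewrite addn0.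
Qed.

Lemma ffact_sqr_le d h : h != 1 -> d ^_ h * d ^_ h <= (d * (d - 1)) ^ h.
Proof.
case: h => [|[|h]] // _; elim: h => [|h IH]; first by rewrite ffactnS ffactn1 subn1.
have le_sqr : (d - h.+2) * (d - h.+2) <= d * (d - 1).
  by apply: leq_mul; [apply: leq_subr | apply: leq_sub2l].
by rewrite ffactnSr expnS mulnACA mulnC; apply: leq_mul.
Qed.

Lemma expnD_le a c e : (a + c) ^ e <= a ^ e + e * c * (a + c) ^ e.-1.
Proof.
elim: e => [|e IH] //=; rewrite expnS.
apply: leq_trans (leq_mul (leqnn _) IH) _; rewrite mulnDr mulnDl -expnS -addnA leq_add2l.
have le_pow : c * a ^ e <= c * (a + c) ^ e.
  by rewrite leq_mul2l; apply/orP; right; case: e {IH} => // e; rewrite leq_exp2r ?leq_addr.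
have shift : (a + c) * (e * c * (a + c) ^ e.-1) = e * c * (a + c) ^ e.
  by case: e {IH le_pow} => [|e]; rewrite ?muln0 ?mul0n //= mulnCA -expnS.
by rewrite shift mulSn mulnDl leq_add2r.
Qed.

Lemma expn_le_double_sub M c e : 2 * e * c <= M -> M ^ e <= 2 * (M - c) ^ e.
Proof.
case: e => [|e] small; first by rewrite !expn0.
have cM : c <= M by nia.
have := expnD_le (M - c) c e.+1; rewrite subnK //=.
set A := (M - c) ^ e.+1; rewrite expnS; set Y := M ^ e; nia.
Qed.

Definition ffact_weight n m d1 d2 (H : bigraph n m) : nat :=
  (\prod_i d1 ^_ (deg1 H i)) * (\prod_j d2 ^_ (deg2 H j)).

Section FfactWeight.
Variables (n m d1 d2 : nat).
Implicit Types (H S : bigraph n m).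

Lemma ffact_weight0 : ffact_weight d1 d2 (set0 : bigraph n m) = 1.
Proof.
by rewrite /ffact_weight !big1 // => ? _; rewrite ?deg1E ?deg2E big1 // => ? _; rewrite inE.
Qed.

Lemma ffact_weight_setU1 S u v : (u, v) \notin S ->
  ffact_weight d1 d2 ((u, v) |: S) =
  ffact_weight d1 d2 S * ((d1 - deg1 S u) * (d2 - deg2 S v)).
Proof.
move=> uvS; rewrite /ffact_weight.
under eq_bigr => i _ do rewrite deg1_setU1 //.
under [X in _ * X]eq_bigr => j _ do rewrite deg2_setU1 //.
by rewrite !prod_ffact_bump mulnACA.
Qed.

Lemma ffact_weight_sqr_le H : min_deg_ge2 H ->
  ffact_weight d1 d2 H * ffact_weight d1 d2 H <= (d1 * (d1 - 1) * (d2 * (d2 - 1))) ^ #|H|.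
Proof.
have ne1 k : (0 < k -> 1 < k) -> k != 1 by case: k => [|[|k]] // /(_ isT).
case=> ge2_1 ge2_2; rewrite /ffact_weight mulnACA expnMn; apply: leq_mul.
  rewrite -big_split -sum_deg1 expn_sum; apply: leq_prod => i _.
  exact/ffact_sqr_le/ne1/ge2_1.
rewrite -big_split -sum_deg2 expn_sum; apply: leq_prod => j _.
exact/ffact_sqr_le/ne1/ge2_2.
Qed.

Lemma nbireg_ffact_weight E H : #|H| <= E ->
  nbireg d1 d2 H * (n * d1 - (E + d1 + d2 + 2 * d1 * d2)) ^ #|H|
  <= nbireg d1 d2 (set0 : bigraph n m) * ffact_weight d1 d2 H.
Proof.
set F := n * d1 - _; set N0 := nbireg d1 d2 (set0 : bigraph n m).
have [k] := ubnP #|H|; elim: k H => // k IH H /ltnSE leHk le_E.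
have [->|[[u v] uvH]] := set_0Vmem H; first by rewrite cards0 ffact_weight0.
set S := H :\ (u, v); have uvS : (u, v) \notin S by rewrite !inE eqxx.
have HE : H = (u, v) |: S by rewrite setD1K.
have cardH : #|H| = #|S|.+1 by rewrite HE cardsU1 uvS.
have IHS : nbireg d1 d2 S * F ^ #|S| <= N0 * ffact_weight d1 d2 S.
  by apply: IH; rewrite -ltnS -cardH // ltnW.
have step : nbireg d1 d2 H * F <= nbireg d1 d2 S * ((d1 - deg1 S u) * (d2 - deg2 S v)).
  rewrite HE; apply: leq_trans (nbireg_setU1 _ _ uvS); rewrite leq_mul2l leq_sub2l ?orbT //.
  by rewrite !leq_add2r -ltnS -cardH ltnW.
rewrite [in X in _ <= X]HE ffact_weight_setU1 // cardH expnS mulnA.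
apply: leq_trans (leq_mul step (leqnn _)) _.
by rewrite mulnAC [X in _ <= X]mulnA leq_mul2r IHS orbT.
Qed.
Lemma nbireg_expn_le H :
  2 * #|H| * (#|H| + d1 + d2 + 2 * d1 * d2) <= n * d1 ->
  nbireg d1 d2 H * (n * d1) ^ #|H|
  <= 2 * nbireg d1 d2 (set0 : bigraph n m) * ffact_weight d1 d2 H.
Proof.
move=> /expn_le_double_sub pow_le; apply: leq_trans (leq_mul (leqnn _) pow_le) _.
by rewrite mulnCA -[X in _ <= X]mulnA leq_mul2l nbireg_ffact_weight ?orbT.
Qed.

End FfactWeight.

Section Probability.
Local Open Scope ring_scope.
Variables n m d1 d2 : nat.
Implicit Types H : bigraph n m.

Lemma bratio_ge0 : 0 <= bratio n m d1 d2.
Proof. by rewrite /bratio divr_ge0 ?ler0n. Qed.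

Lemma prob_subE H :
  prob_sub d1 d2 H = (nbireg d1 d2 H)%:R / (nbireg d1 d2 (set0 : bigraph n m))%:R.
Proof.
by rewrite /prob_sub /nbireg; congr (_ / _%:R); apply: eq_card => G; rewrite !inE sub0set andbT.
Qed.

Lemma prob_sub_le1 H : prob_sub d1 d2 H <= 1.
Proof.
rewrite prob_subE; have [->|N0_gt0] := posnP (nbireg d1 d2 (set0 : bigraph n m)).
  by rewrite invr0 mulr0.
rewrite ler_pdivrMr ?ltr0n // mul1r ler_nat subset_leq_card //.
by apply/subsetP => G; rewrite !inE sub0set => /andP[->].
Qed.

Lemma sqr_sqrt_bratio : (n * d1 = m * d2)%N -> (0 < n * d1)%N ->
  ((n * d1)%:R * Num.sqrt (bratio n m d1 d2)) ^+ 2 = (d1 * (d1 - 1) * (d2 * (d2 - 1)))%:R :> R.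
Proof.
move=> nm_eq M_gt0; rewrite exprMn sqr_sqrtr ?bratio_ge0 // /bratio -natrX.
have -> : ((n * d1) ^ 2 = (n * m) * (d1 * d2))%N by rewrite expnS expn1 {2}nm_eq; ring.
have /andP[n_gt0 m_gt0] : (0 < n)%N && (0 < m)%N.
  by move: M_gt0 (M_gt0); rewrite {1}nm_eq !muln_gt0 => /andP[-> _] /andP[-> _].
by field; rewrite !pnatr_eq0 -!lt0n m_gt0 n_gt0.
Qed.

Lemma ffact_weight_le H : (n * d1 = m * d2)%N -> (0 < n * d1)%N -> min_deg_ge2 H ->
  (ffact_weight d1 d2 H)%:R <= ((n * d1)%:R * Num.sqrt (bratio n m d1 d2)) ^+ #|H| :> R.
Proof.
move=> nm_eq M_gt0 /(ffact_weight_sqr_le d1 d2); rewrite -(ler_nat R) natrM natrX.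
rewrite -(sqr_sqrt_bratio nm_eq M_gt0) exprAC -expr2 ler_sqr //.
all: by rewrite nnegrE ?exprn_ge0 ?mulr_ge0 ?sqrtr_ge0 ?ler0n.
Qed.

Lemma prob_sub_le H : (n * d1 = m * d2)%N -> min_deg_ge2 H ->
  (2 * #|H| * (#|H| + d1 + d2 + 2 * d1 * d2) <= n)%N ->
  prob_sub d1 d2 H <= 2 * Num.sqrt (bratio n m d1 d2) ^+ #|H|.
Proof.
move=> nm_eq Hmin small; have rhs_ge0 : 0 <= 2 * Num.sqrt (bratio n m d1 d2) ^+ #|H|.
  by rewrite mulr_ge0 ?exprn_ge0 ?sqrtr_ge0.
have [H0|H_gt0] := posnP #|H|.
  by rewrite H0 expr0 mulr1 (le_trans (prob_sub_le1 _)) ?ler1n.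
have [d1_0|d1_gt0] := posnP d1.
  rewrite prob_subE; suff -> : nbireg d1 d2 H = 0%N by rewrite mul0r.
  apply/eqP; rewrite cards_eq0; apply/eqP/setP => G; rewrite !inE.
  apply/negP => /andP[/card_biregular]; rewrite d1_0 muln0 => /eqP; rewrite cards_eq0 => /eqP->.
  by rewrite subset0 => /eqP H_0; rewrite H_0 cards0 in H_gt0.
have n_gt0 : (0 < n)%N by nia.
have M_gt0 : (0 < n * d1)%N by rewrite muln_gt0 n_gt0.
have count := nbireg_expn_le (leq_trans small (leq_pmulr n d1_gt0)).
rewrite prob_subE; set N0 := nbireg d1 d2 (set0 : bigraph n m).
have [->|N0_gt0] := posnP N0; first by rewrite invr0 mulr0.
have pow_gt0 : 0 < (n * d1)%:R ^+ #|H| :> R by rewrite exprn_gt0 ?ltr0n.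
rewrite ler_pdivrMr ?ltr0n // -(ler_pM2r pow_gt0).
apply: le_trans (_ : 2 * N0%:R * (ffact_weight d1 d2 H)%:R <= _).
  by rewrite -natrX -!natrM ler_nat.
rewrite -!mulrA ler_wpM2l // mulrCA ler_wpM2l ?ler0n // mulrC -exprMn.
exact: ffact_weight_le.
Qed.

End Probability.

Lemma ordS_neq k (i : 'I_k) : 1 < k -> ordS i != i.
Proof.
move=> k_gt1; apply/negP => /eqP/(congr1 val) /=.
have [ik|ik] := ltnP i.+1 k; first by rewrite modn_small // => /eqP; rewrite eq_sym ltn_eqF.
have -> : i.+1 = k by apply/eqP; rewrite eqn_leq ik ltn_ord.
by rewrite modnn => i0; lia.
Qed.

Section Cycle.
Variables (n m k : nat) (C : bigraph n m).
Hypothesis C_cycle : is_cycle k C.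

Lemma card_cycle : #|C| = 2 * k.
Proof.
case: C_cycle => k_gt1 [a [b [a_inj [b_inj ->]]]].
rewrite cardsU !card_imset ?card_ord => [|i j [] _ /b_inj|i j [] /a_inj] //.
suff -> : [set (a i, b i) | i : 'I_k] :&: [set (a (ordS i), b i) | i : 'I_k] = set0.
  by rewrite cards0 subn0 mul2n addnn.
apply/setP => p; rewrite !inE; apply/negP => /andP[/imsetP[i _ ->] /imsetP[j _ []]].
by move=> /a_inj ai /b_inj ij; move: ai; rewrite ij => /esym/eqP; rewrite (negbTE (ordS_neq j k_gt1)).
Qed.

Lemma cycle_min_deg_ge2 : min_deg_ge2 C.
Proof.
case: C_cycle => k_gt1 [a [b [a_inj [b_inj ->]]]].
set C' := _ :|: _.
have row s : 1 < deg1 C' (a s).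
  apply/card_gt1P; exists (b s), (b (ord_pred s)); rewrite !inE.
  split; first by apply/orP; left; apply/imsetP; exists s.
    by apply/orP; right; apply/imsetP; exists (ord_pred s); rewrite ?ord_predK.
  apply: contra_neq (ordS_neq (ord_pred s) k_gt1) => /b_inj.
  by rewrite ord_predK.
have col t : 1 < deg2 C' (b t).
  apply/card_gt1P; exists (a t), (a (ordS t)); rewrite !inE.
  split; first by apply/orP; left; apply/imsetP; exists t.
    by apply/orP; right; apply/imsetP; exists t.
  by apply: contra_neq (ordS_neq t k_gt1) => /a_inj.
split=> [x|y]; rewrite card_gt0 => /set0Pn[z]; rewrite !inE.
  by case/orP=> /imsetP[t _ [-> _]].
by case/orP=> /imsetP[t _ [_ ->]].
Qed.

End Cycle.

Lemma edge_budget n d1 d2 e : d2 <= d1 -> 4 * e ^ 2 <= n -> 16 * e * d1 ^ 2 <= n ->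
  2 * e * (e + d1 + d2 + 2 * d1 * d2) <= n.
Proof.
move=> d21 e_small d_small.
have deg_part : d1 + d2 + 2 * d1 * d2 <= 4 * d1 ^ 2 by case: d1 d21 {d_small} => [|d1]; nia.
nia.
Qed.

Lemma sparse_budget n d1 d2 e : d2 <= d1 -> (16 * e) ^ 3 <= n -> d1 ^ 3 <= n ->
  2 * e * (e + d1 + d2 + 2 * d1 * d2) <= n.
Proof.
move=> d21 e_small d_small; apply: edge_budget => //.
  by apply: leq_trans e_small; case: e => [|e]; nia.
rewrite -(leq_exp2r _ _ (isT : 0 < 3)) !expnMn -expnMn.
have -> : n ^ 3 = n * (n * n) by rewrite !expnS expn0 muln1.
exact: leq_mul e_small (leq_mul d_small d_small).
Qed.

Lemma cycle_budget n d1 d2 t e : d2 <= d1 -> 64 ^ 5 <= n -> t ^ 10 <= n -> d1 ^ 3 <= n ->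
  e <= 4 * t -> 2 * e * (e + d1 + d2 + 2 * d1 * d2) <= n.
Proof.
move=> d21 n_large t_small d_small e_le; have n_gt0 : 0 < n by apply: leq_trans n_large.
have t_part : 64 * t ^ 2 <= n.
  rewrite -(leq_exp2r _ _ (isT : 0 < 5)) expnMn -expnM.
  apply: leq_trans (leq_mul n_large t_small) _; rewrite mulnn.
  by rewrite leq_pexp2l.
(* t d1^2 <= n^(1/10 + 2/3) = n^(23/30), hence the 30th powers. *)
have td_part : 64 * t * d1 ^ 2 <= n.
  rewrite -(leq_exp2r _ _ (isT : 0 < 30)) !expnMn.
  have -> : 64 ^ 30 = (64 ^ 5) ^ 6 by rewrite -expnM.
  have -> : t ^ 30 = (t ^ 10) ^ 3 by rewrite -expnM.
  have -> : d1 ^ 30 * d1 ^ 30 = (d1 ^ 3) ^ 20 by rewrite -expnD -expnM.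
  apply: (@leq_trans (n ^ 6 * n ^ 3 * n ^ 20)).
    by rewrite !leq_mul ?leq_exp2r.
  by rewrite -!expnD leq_pexp2l.
apply: edge_budget => //; nia.
Qed.

Local Open Scope ring_scope.

Lemma little_o_cuberootP g K : little_o_cuberoot g -> (0 < K)%N ->
  exists N, forall n, (N <= n)%N -> ((K * g n) ^ 3 <= n)%N.
Proof.
move=> g_small K_gt0; have K3_gt0 : 0 < K%:R ^+ 3 :> R by rewrite exprn_gt0 ?ltr0n.
have [|N gN] := g_small (K%:R ^+ 3)^-1; first by rewrite invr_gt0. exists N => n /gN le_eps.
rewrite -(ler_nat R) natrX natrM exprMn.
by apply: le_trans (ler_wpM2l (ltW K3_gt0) le_eps) _; rewrite mulrA mulfV ?gt_eqF // mul1r.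
Qed.

Theorem lemma2p3 :
  exists c1 : R, 0 < c1 /\
  (* (1) *)
  (forall g : nat -> nat, little_o_cuberoot g ->
     exists N : nat, forall (n m d1 d2 : nat), (N <= n)%N ->
       (n * d1 = m * d2)%N -> (d2 <= d1)%N -> (d1 ^ 3 <= n)%N ->
       forall H : bigraph n m, min_deg_ge2 H -> (#|H| <= g n)%N ->
         prob_sub d1 d2 H <= c1 * Num.sqrt (bratio n m d1 d2) ^+ #|H|) /\
  (* (2) and (3) *)
  (exists N : nat, forall (n m d1 d2 : nat), (N <= n)%N ->
     (n * d1 = m * d2)%N -> (d2 <= d1)%N -> (d1 ^ 3 <= n)%N ->
     forall (k : nat) (alpha : bigraph n m), is_cycle k alpha -> (k ^ 10 <= n)%N ->
       prob_sub d1 d2 alpha <= c1 * bratio n m d1 d2 ^+ k /\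
       (forall (j : nat) (beta : bigraph n m), is_cycle j beta -> (j ^ 10 <= n)%N ->
          prob_sub d1 d2 (alpha :|: beta) <=
            c1 * Num.sqrt (bratio n m d1 d2) ^+ (2 * j + 2 * k - #|alpha :&: beta|))).
Proof.
exists 2; split=> //; split.
  move=> g /(little_o_cuberootP (K := 16)) [//|N g_small]; exists N.
  move=> n m d1 d2 nN nm_eq d21 d1_small H Hmin Hg.
  apply: prob_sub_le nm_eq Hmin (sparse_budget d21 _ d1_small).
  by apply: leq_trans (g_small n nN); rewrite leq_exp2r // leq_mul2l Hg orbT.
exists (64 ^ 5)%N => n m d1 d2 n_large nm_eq d21 d1_small k alpha alpha_cyc k_small.
have alpha_card := card_cycle alpha_cyc.
split.
  rewrite -(sqr_sqrtr (bratio_ge0 n m d1 d2)) -exprM -alpha_card.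
  apply: prob_sub_le nm_eq (cycle_min_deg_ge2 alpha_cyc) _.
  by apply: cycle_budget d21 n_large k_small d1_small _; rewrite alpha_card leq_mul2r orbT.
move=> j beta beta_cyc j_small; have beta_card := card_cycle beta_cyc.
have -> : (2 * j + 2 * k - #|alpha :&: beta| = #|alpha :|: beta|)%N.
  by rewrite -alpha_card -beta_card addnC -cardsUI addnK.
apply: prob_sub_le nm_eq (min_deg_ge2U (cycle_min_deg_ge2 alpha_cyc) (cycle_min_deg_ge2 beta_cyc)) _.
apply: (cycle_budget (t := maxn k j)) => //; first by rewrite /maxn; case: ifP.
by have := cardsUI alpha beta; rewrite alpha_card beta_card; lia.
Qed.
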